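(* Let $n \ge 2$ and let $\lambda = a_1\omega_1 + \cdots + a_{2n-1}\omega_{2n-1}$ ($a_i \in \mathbb{Z}_{\ge 0}$) be a dominant weight of $\mathfrak{sl}(2n,\mathbb{C})$, and assume that either $n = 2$ or $\lambda = a_1\omega_1 + a_2\omega_2 + a_3\omega_3$. Let $\nu = b_1\omega_1 + \cdots + b_n\omega_n$ ($b_i \in \mathbb{Z}_{\ge 0}$). Then there is a bijection $$\operatorname{domres}(\lambda,\nu) \;\longleftrightarrow\; \bigcup_{\substack{\eta \text{ dominant},\ \text{shape of } \eta \subseteq \text{shape of } \lambda,\\ \text{shape of } \eta \text{ even}}} \operatorname{LR}(\lambda/\eta,\nu).$$
   Context: $\omega_i$ are the fundamental weights of $\mathfrak{sl}(2n,\mathbb{C})$, $\varepsilon_i$ ($1\le i\le 2n$) the standard weights with $\varepsilon_i(\operatorname{diag}(a_1,\dots,a_{2n}))=a_i$. The shape of a dominant weight $\mu=\sum c_i\omega_i$ is the Young diagram (left- and top-justified) with $c_i$ columns of length $i$, longer columns to the left; containment is as diagrams aligned at top-left corners; a shape is even if all its columns have even length. Let $\mathfrak{g}^\sigma \cong \mathfrak{sp}(2n,\mathbb{C})$ be the fixed points of the automorphism $\sigma$ of $\mathfrak{sl}(2n,\mathbb{C})$ induced by the folding $i \mapsto 2n-i$ of the $A_{2n-1}$ Dynkin diagram, with Cartan subalgebra $\mathfrak{h}^\sigma$ (the $\sigma$-fixed diagonal matrices). Set $\hat\varepsilon_i = \varepsilon_i|_{\mathfrak{h}^\sigma}$, so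 $\hat\varepsilon_{2n+1-i} = -\hat\varepsilon_i$; the fundamental weights of $\mathfrak{g}^\sigma$ are $\hat\omega_i = \hat\varepsilon_1+\cdots+\hat\varepsilon_i$, and $\hat\nu := b_1\hat\omega_1+\cdots+b_n\hat\omega_n$. Semi-standard Young tableaux of the shape of $\lambda$ have entries in $\{1,\dots,2n\}$, rows weakly increasing left to right, columns strictly increasing downward; the word of a tableau reads rows right to left, top row first. $\operatorname{domres}(\lambda)$ is the set of such tableaux $\mathscr{T}$ with word $w_1\cdots w_k$ such that for every prefix $w_1\cdots w_j$, writing $\sum_{l\le j}\hat\varepsilon_{w_l} = \sum_{i=1}^n c_i\hat\varepsilon_i$, one has $c_1\ge\cdots\ge c_n\ge 0$. $\operatorname{domres}(\lambda,\nu)$ is the set of $\mathscr{T}\in\operatorname{domres}(\lambda)$ with $\sum_{l=1}^k \hat\varepsilon_{w_l} = \hat\nu$. For dominant $\eta$ with shape contained in that of $\lambda$, $\operatorname{LR}(\lambda/\eta,\nu)$ is the set of fillings of the boxes of the shape of $\lambda$ not in the shape of $\eta$ with letters from $\{1,\dots,2n\}$, rows weakly increasing, columns strictly increasing, whose word (rows read right to left, top to bottom, ignoring empty boxes) is dominant (in every prefix the number of letters $i$ is at least the number of letters $i+1$, for all $i$) and has weight $\nu$ (the number of entries equal to $i$ equals the number of boxes in row $i$ of the shape of $\nu$). *)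

From mathcomp Require Import all_boot all_order all_algebra.
Set Implicit Arguments. Unset Strict Implicit. Unset Printing Implicit Defensive.
Import GRing.Theory Num.Theory.

(* A dominant weight  mu = c_1 w_1 + ... + c_m w_m  is encoded by the list
   c = [:: c_1; ...; c_m]  (so  nth 0 c j = c_(j+1), 0-based indices).
   Its shape (c_i columns of length i, longer columns left) has, in (0-based)
   row r, exactly  rowlen c r = c_(r+1) + ... + c_m  boxes.
   A filling of a (skew) shape is a list of rows (seq (seq nat)), row r listing
   the entries of row r from left to right. *)

Definition rowlen (c : seq nat) (r : nat) : nat := \sum_(r <= j < size c) nth 0 c j.

Definition entry (T : seq (seq nat)) (r k : nat) : nat := nth 0 (nth [::] T r) k.

Definition word (T : seq (seq nat)) : seq nat := flatten (map rev T).

Definition prefixes (w : seq nat) : seq (seq nat) :=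
  [seq take j w | j <- iota 0 (size w).+1].

Definition ssyt (n : nat) (a : seq nat) (T : seq (seq nat)) : bool :=
  [&& size T == size a,
      all (fun r => size (nth [::] T r) == rowlen a r) (iota 0 (size a)),
      all (fun x => (1 <= x) && (x <= 2 * n)) (flatten T),
      all (sorted leq) T &
      all (fun r => all (fun k => entry T r k < entry T r.+1 k)
                        (iota 0 (rowlen a r.+1)))
          (iota 0 (size a).-1)].

(* coefficient of hat-eps_i in  sum_{l} hat-eps_{w_l}, using hat-eps_{2n+1-i} = - hat-eps_i *)
Definition hatcoef (n : nat) (w : seq nat) (i : nat) : int :=
  ((count_mem i w)%:Z - (count_mem (2 * n + 1 - i)%N w)%:Z)%R.

Definition hatdominant (n : nat) (w : seq nat) : bool :=
  all (fun i => (hatcoef n w i.+1 <= hatcoef n w i)%R) (iota 1 n.-1)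
  && (0 <= hatcoef n w n)%R.

Definition domres (n : nat) (a : seq nat) (T : seq (seq nat)) : bool :=
  ssyt n a T && all (hatdominant n) (prefixes (word T)).

(* domres(lambda, nu): total restricted weight equals  hat nu = sum_i b_i hat-omega_i
   = sum_i (b_i + ... + b_n) hat-eps_i *)
Definition domres_nu (n : nat) (a b : seq nat) (T : seq (seq nat)) : bool :=
  domres n a T &&
  all (fun i => hatcoef n (word T) i == ((rowlen b i.-1)%:Z : int)) (iota 1 n).

Definition shape_sub (e a : seq nat) : bool :=
  all (fun r => rowlen e r <= rowlen a r) (iota 0 (maxn (size e) (size a))).

(* all columns of the shape of eta have even length: c_i = 0 for odd i *)
Definition even_shape (e : seq nat) : bool :=
  all (fun j => odd j.+1 ==> (nth 0 e j == 0)) (iota 0 (size e)).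

(* filling of lambda/eta: row r holds the entries of boxes (r, k),
   rowlen e r <= k < rowlen a r, stored at position k - rowlen e r *)

Definition skew_tableau (n : nat) (a e : seq nat) (T : seq (seq nat)) : bool :=
  [&& size T == size a,
      all (fun r => size (nth [::] T r) == rowlen a r - rowlen e r) (iota 0 (size a)),
      all (fun x => (1 <= x) && (x <= 2 * n)) (flatten T),
      all (sorted leq) T &
      all (fun r => all (fun k => (rowlen e r <= k) ==>
                         (entry T r (k - rowlen e r) < entry T r.+1 (k - rowlen e r.+1)))
                        (iota 0 (rowlen a r.+1)))
          (iota 0 (size a).-1)].

Definition lattice_word (n : nat) (w : seq nat) : bool :=
  all (fun p => all (fun i => count_mem i.+1 p <= count_mem i p) (iota 1 (2 * n)))
      (prefixes w).

(* weight nu: number of entries i = number of boxes in row i of the shape of nu *)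
Definition LR (n : nat) (a e b : seq nat) (T : seq (seq nat)) : bool :=
  [&& skew_tableau n a e T, lattice_word n (word T) &
      all (fun i => count_mem i (word T) == rowlen b i.-1) (iota 1 (2 * n))].

(* elements of the union over dominant even eta inside lambda of LR(lambda/eta, nu),
   tagged by eta (the union is disjoint since distinct eta give distinct skew shapes) *)
Definition LRunion (n : nat) (a b : seq nat) (p : seq nat * seq (seq nat)) : bool :=
  [&& size p.1 == (2 * n).-1, shape_sub p.1 a, even_shape p.1 & LR n a p.1 b p.2].

(* Since lambda has at most three rows, of lengths L1 >= L2 >= L3, both sides are
   described by four numbers.  Reading a tableau of domres(lambda, nu) right to left, a
   letter in the window (lo, 2n+1-lo] of letters not read so far breaks the dominance of
   the restricted weight; row by row this forces the rows 1^L1, 2^(L2-m) (2n)^m and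
   3^r (2n-1)^q (2n)^p.  Likewise an even eta inside lambda is k columns of length 2, and
   the lattice condition forces the filling of lambda/eta to have rows 1^(L1-k), 2^(L2-k)
   and 1^u 2^s 3^t.  Column strictness, dominance and the weight nu turn into the same
   linear constraints on both sides under (k, u, s, t) = (m + p + q, q, p, r). *)

From mathcomp Require Import all_boot all_order all_algebra zify.
Set Implicit Arguments. Unset Strict Implicit. Unset Printing Implicit Defensive.

Ltac decide_nat_eqs := repeat match goal with
  | |- context [?x == ?y :> nat] =>
      first [ rewrite (_ : (x == y) = false); [| apply/eqP; lia]
            | rewrite (_ : (x == y) = true); [| apply/eqP; lia] ] end.

(** * Words, prefixes and sorted rows *)

Lemma all_prefixesP (P : pred (seq nat)) w :
  reflect (forall j, P (take j w)) (all P (prefixes w)).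
Proof.
apply: (iffP allP) => [Pw j | Pw _ /mapP[j _ ->] //].
have [j_le | j_gt] := leqP j (size w).
  by apply: Pw; apply/mapP; exists j; rewrite // mem_iota.
rewrite take_oversize ?(ltnW j_gt) //.
have := Pw (take (size w) w); rewrite take_size; apply.
by apply/mapP; exists (size w); rewrite ?take_size // mem_iota; lia.
Qed.

Lemma prefixes_catl (P : pred (seq nat)) u v : all P (prefixes (u ++ v)) -> P u.
Proof. by move=> /all_prefixesP /(_ (size u)); rewrite take_size_cat. Qed.

Lemma take_cat_nseq_closed (P : pred (seq nat)) u m v :
  (forall j, P (take j u)) -> (forall j, j <= m -> P (u ++ nseq j v)) ->
  forall j, P (take j (u ++ nseq m v)).
Proof.
move=> Pu Pv j; rewrite take_cat; case: ltnP => [_|_]; first exact: Pu.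
have [le_jm | lt_mj] := leqP (j - size u) m; first by rewrite take_nseq //; apply: Pv.
by rewrite take_oversize ?size_nseq ?(ltnW lt_mj) //; apply: Pv.
Qed.

Lemma sorted_rev_cat_ge (R s1 s2 : seq nat) y :
  sorted leq R -> rev R = s1 ++ y :: s2 -> {in s1, forall x, y <= x}.
Proof.
move=> sR eR x x_s1; have : sorted geq (rev R) by rewrite rev_sorted.
rewrite eR (sorted_pairwise (fun _ _ _ h1 h2 => leq_trans h2 h1)) pairwise_cat.
by case/and3P => /allrelP /(_ x y x_s1 (mem_head _ _)).
Qed.

Lemma sorted_eq_count (s1 s2 : seq nat) : sorted leq s1 -> sorted leq s2 ->
  (forall x, count_mem x s1 = count_mem x s2) -> s1 = s2.
Proof.
move=> s1_sorted s2_sorted eq_count.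
apply: (sorted_eq leq_trans anti_leq s1_sorted s2_sorted).
by apply/allP => x _ /=; rewrite eq_count.
Qed.

Lemma sorted_nseq_cat c v s : sorted leq s -> all (leq v) s -> sorted leq (nseq c v ++ s).
Proof.
move=> s_sorted v_le; elim: c => [|c IH] //=.
rewrite (path_sortedE leq_trans) IH all_cat v_le andbT.
by rewrite all_nseq leqnn orbT.
Qed.

Lemma sorted_nseq c (v : nat) : sorted leq (nseq c v).
Proof. by rewrite -(cats0 (nseq c v)); apply: sorted_nseq_cat. Qed.

Lemma sorted_three_blocks (s : seq nat) v1 v2 v3 : sorted leq s -> v1 < v2 < v3 ->
  {in s, forall x, [|| x == v1, x == v2 | x == v3]} ->
  s = nseq (count_mem v1 s) v1 ++ nseq (count_mem v2 s) v2 ++ nseq (count_mem v3 s) v3.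
Proof.
move=> s_sorted lt_v s_v; apply: sorted_eq_count => //.
  apply: sorted_nseq_cat; last by rewrite all_cat !all_nseq; apply/andP; split; apply/orP; right; lia.
  apply: sorted_nseq_cat; first exact: sorted_nseq.
  by rewrite all_nseq; apply/orP; right; lia.
move=> x; rewrite !count_cat !count_nseq /=.
have [x_s | x_notin_s] := boolP (x \in s).
  by case/or3P: (s_v x x_s) => /eqP ->; decide_nat_eqs; lia.
have x0 : count_mem x s = 0 by apply/count_memPn.
have zero v : (v == x) * count_mem v s = 0 by case: eqP => [->|]; rewrite ?x0 ?mul0n.
by rewrite x0 !zero.
Qed.

Lemma sorted_two_blocks (s : seq nat) v1 v2 : sorted leq s -> v1 < v2 ->
  {in s, forall x, (x == v1) || (x == v2)} ->
  s = nseq (count_mem v1 s) v1 ++ nseq (count_mem v2 s) v2.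
Proof.
move=> s_sorted lt_v s_v.
have no_v3 : count_mem v2.+1 s = 0.
  by apply/count_memPn/negP => /s_v /orP[] /eqP; lia.
rewrite {1}(@sorted_three_blocks s v1 v2 v2.+1) ?no_v3 ?cats0 //; first lia.
by move=> x /s_v /orP[] ->; rewrite ?orbT.
Qed.

Lemma sorted_three_blocks_leq (s : seq nat) v1 v2 v3 : sorted leq s -> v1 <= v2 < v3 ->
  {in s, forall x, [|| x == v1, x == v2 | x == v3]} ->
  s = nseq (size s - count_mem v2 s - count_mem v3 s) v1
      ++ nseq (count_mem v2 s) v2 ++ nseq (count_mem v3 s) v3.
Proof.
move=> s_sorted le_v s_v; have [eq12 | ne12] := eqVneq v1 v2.
  have s_E : s = nseq (count_mem v2 s) v2 ++ nseq (count_mem v3 s) v3.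
    by apply: sorted_two_blocks => // [|x /s_v]; [lia | rewrite eq12 orbA orbb].
  by rewrite {1 2}s_E size_cat !size_nseq -subnDA subnn.
have s_E := @sorted_three_blocks s v1 v2 v3 s_sorted ltac:(lia) s_v.
by rewrite {1 2}s_E !size_cat !size_nseq -subnDA addnK.
Qed.

Lemma nth_blocks3 c1 v1 c2 v2 c3 v3 k :
  nth 0 (nseq c1 v1 ++ nseq c2 v2 ++ nseq c3 v3) k =
  if k < c1 then v1 else if k < c1 + c2 then v2 else if k < c1 + c2 + c3 then v3 else 0.
Proof. by rewrite !nth_cat !size_nseq !nth_nseq; repeat case: ifP; lia. Qed.

Lemma nth_blocks2 c1 v1 c2 v2 k :
  nth 0 (nseq c1 v1 ++ nseq c2 v2) k = if k < c1 then v1 else if k < c1 + c2 then v2 else 0.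
Proof. by rewrite !nth_cat !size_nseq !nth_nseq; repeat case: ifP; lia. Qed.

Lemma column_lower_bound (R S : seq nat) lo : size S <= size R ->
  (forall k, k < size S -> nth 0 R k < nth 0 S k) -> {in R, forall x, lo <= x} ->
  {in S, forall y, lo < y}.
Proof.
move=> le_size col R_ge y /(nthP 0)[k lt_k <-].
by apply: leq_trans (col k lt_k); apply/R_ge/mem_nth/(leq_trans lt_k).
Qed.

(** * Restricted weights and lattice words *)

Lemma hatcoef_cat n u v i : hatcoef n (u ++ v) i = (hatcoef n u i + hatcoef n v i)%R.
Proof. rewrite /hatcoef !count_cat; lia. Qed.

Lemma hatcoef_nseq n m v i :
  hatcoef n (nseq m v) i = (((v == i) * m)%:Z - ((v == (2 * n + 1 - i)%N) * m)%:Z)%R.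
Proof. by rewrite /hatcoef !count_nseq. Qed.

Lemma hatcoef_out n w i : i \notin w -> (2 * n + 1 - i)%N \notin w -> hatcoef n w i = 0%R.
Proof. by rewrite /hatcoef => /count_memPn -> /count_memPn ->. Qed.

Lemma hatdominant_le n w i : hatdominant n w -> 1 <= i < n ->
  (hatcoef n w i.+1 <= hatcoef n w i)%R.
Proof. by case/andP => /allP dom _ i_range; apply: dom; rewrite mem_iota; lia. Qed.

Lemma hatdominant_ge0 n w i : hatdominant n w -> 1 <= i <= n -> (0 <= hatcoef n w i)%R.
Proof.
move=> dom; have [_ ge0_n] := andP dom.
elim: {i}(n - i) {-2}i (erefl (n - i)) => [|d IH] i d_eq i_range.
  by have -> : i = n by lia.
by apply: Order.POrderTheory.le_trans (IH i.+1 _ _) (hatdominant_le dom _); lia.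
Qed.

Lemma hatdominant_intro n w :
  (forall i, 1 <= i < n -> (hatcoef n w i.+1 <= hatcoef n w i)%R) ->
  (0 <= hatcoef n w n)%R -> hatdominant n w.
Proof.
move=> dom ge0_n; rewrite /hatdominant ge0_n andbT.
by apply/allP => i; rewrite mem_iota => i_range; apply: dom; lia.
Qed.

(* A letter y strictly inside the window (lo, 2n+1-lo] of letters absent so far breaks
   dominance: either c_y = 1 > c_(y-1) = 0, or c_(2n+1-y) = -1 < 0. *)
Lemma not_hatdominant_rcons n lo w y : 1 <= lo < y -> y <= 2 * n + 1 - lo ->
  {in w, forall x, (x < lo) || (2 * n + 1 - lo < x)} -> ~~ hatdominant n (rcons w y).
Proof.
move=> lt_lo_y y_le w_out; apply/negP => dom.
have coef0 i : lo <= i <= n -> hatcoef n w i = 0%R.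
  by move=> i_range; apply: hatcoef_out; apply/negP => /w_out; lia.
rewrite -cats1 in dom.
have [y_le_n | n_lt_y] := leqP y n.
  have := hatdominant_le dom (i := y.-1) ltac:(lia).
  rewrite prednK ?(ltn_trans _ lt_lo_y) //; last lia.
  rewrite !hatcoef_cat !coef0 /hatcoef /=; lia.
have := hatdominant_ge0 dom (i := (2 * n + 1 - y)%N) ltac:(lia).
rewrite !hatcoef_cat !coef0 /hatcoef /=; lia.
Qed.

Lemma lattice_word_cat n p q i : lattice_word n (p ++ q) -> 1 <= i <= 2 * n ->
  count_mem i.+1 p <= count_mem i p.
Proof. by move=> /prefixes_catl /allP lat i_range; apply: lat; rewrite mem_iota; lia. Qed.

(* Read right to left, a weakly increasing row meets its largest letter y in the window
   (lo, 2n+1-lo] first; everything read before it lies outside the window. *)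
Lemma hatdominant_row n lo w R v : 1 <= lo -> sorted leq R -> {in R, forall x, lo <= x} ->
  all (fun x => (x < lo) || (2 * n + 1 - lo < x)) w ->
  all (hatdominant n) (prefixes (w ++ rev R ++ v)) ->
  {in R, forall x, (x == lo) || (2 * n + 1 - lo < x)}.
Proof.
move=> lo_ge1 R_sorted R_ge /allP w_out dom.
pose gap x := (lo < x) && (x <= 2 * n + 1 - lo).
suff /hasPn no_gap : ~~ has gap (rev R).
  by move=> x x_R; have := no_gap x; rewrite mem_rev /gap => /(_ x_R); have := R_ge x x_R; lia.
apply/negP => has_gap.
have [y [s1 [s2 [gap_y no_gap_s1 eR]]]] :
    exists y s1 s2, [/\ gap y, ~~ has gap s1 & rev R = rcons s1 y ++ s2].
  by case: (split_find has_gap) => y s1 s2 *; exists y, s1, s2.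
have s1_ge : {in s1, forall x, y <= x}.
  by apply: (sorted_rev_cat_ge R_sorted); rewrite eR cat_rcons.
have s1_out : {in s1, forall x, 2 * n + 1 - lo < x}.
  move=> x x_s1; have := s1_ge x x_s1; have /hasPn /(_ x x_s1) := no_gap_s1.
  by move: gap_y; rewrite /gap; lia.
have : hatdominant n (rcons (w ++ s1) y).
  by apply: (prefixes_catl (v := s2 ++ v)); move: dom; rewrite eR rcons_cat -!catA.
apply/negP/(@not_hatdominant_rcons n lo); [by move: gap_y; rewrite /gap; lia | by case/andP: gap_y |].
by move=> x; rewrite mem_cat => /orP[/w_out // | /s1_out ->]; rewrite orbT.
Qed.

Lemma lattice_row n m w R v : 1 <= m -> sorted leq R -> {in R, forall x, x <= 2 * n} ->
  all (fun x => x < m) w -> lattice_word n (w ++ rev R ++ v) -> {in R, forall x, x <= m}.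
Proof.
move=> m_ge1; case/lastP: R => [//|R y].
rewrite (sorted_pairwise leq_trans) pairwise_rcons => /andP[/allP le_y _] R_le /allP w_lt lat x x_R.
have le_xy : x <= y by move: x_R; rewrite mem_rcons inE => /orP[/eqP -> // | /le_y].
rewrite (leq_trans le_xy) // leqNgt; apply/negP => lt_m_y.
have y_le : y <= 2 * n by apply: R_le; rewrite mem_rcons mem_head.
have lat_y : lattice_word n ((w ++ [:: y]) ++ (rev R ++ v)) by rewrite -catA; move: lat; rewrite rev_rcons.
have y_w : y \notin w by apply/negP => /w_lt; lia.
have y1_w : y.-1 \notin w by apply/negP => /w_lt; lia.
have := @lattice_word_cat n _ _ y.-1 lat_y; rewrite prednK; last lia.
rewrite !count_cat (count_memPn y_w) (count_memPn y1_w) /= eqxx; decide_nat_eqs.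
by move=> /(_ ltac:(lia)).
Qed.

(** * Tableaux with three rows *)

Lemma rowlen_default c r : size c <= r -> rowlen c r = 0.
Proof. by move=> le_c_r; rewrite /rowlen big_geq. Qed.

Lemma rowlen_recl c r : r < size c -> rowlen c r = nth 0 c r + rowlen c r.+1.
Proof. by move=> lt_r_c; rewrite /rowlen big_ltn. Qed.

Lemma rowlen_eq0 c r : (forall j, r <= j -> nth 0 c j = 0) -> rowlen c r = 0.
Proof. by move=> c0; rewrite /rowlen big_nat big1 // => j /andP[/c0]. Qed.

Lemma leq_rowlenS c r : rowlen c r.+1 <= rowlen c r.
Proof.
have [le_c_r | lt_r_c] := leqP (size c) r; last by rewrite (rowlen_recl lt_r_c) leq_addl.
by rewrite !rowlen_default //; apply: leqW.
Qed.

Lemma nth_leq_rowlen c r j : r <= j -> nth 0 c j <= rowlen c r.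
Proof.
move=> le_rj; have [lt_j_c | le_c_j] := ltnP j (size c); last by rewrite nth_default.
rewrite /rowlen (big_cat_nat le_rj (ltnW lt_j_c)) /= [X in _ + X]big_ltn //; lia.
Qed.

Lemma rowlen_three_rows n a : size a = (2 * n).-1 ->
  (n = 2 \/ forall j, 3 <= j -> nth 0 a j = 0) -> forall r, 3 <= r -> rowlen a r = 0.
Proof.
move=> size_a a_short r le3r; apply: rowlen_eq0 => j le_rj.
case: a_short => [n2 | a0]; last by apply: a0; lia.
by rewrite nth_default // size_a n2; lia.
Qed.

Lemma eq_three_rows (T : seq (seq nat)) m : size T = 3 + m ->
  (forall r, 3 <= r < 3 + m -> size (nth [::] T r) = 0) ->
  T = [:: nth [::] T 0; nth [::] T 1; nth [::] T 2] ++ nseq m [::].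
Proof.
move=> size_T rows0; apply: (eq_from_nth (x0 := [::])).
  by rewrite size_cat size_nseq size_T.
move=> r; rewrite size_T => lt_r; rewrite nth_cat /=; case: ifP => lt_r3.
  by case: r lt_r lt_r3 => [|[|[|]]].
by rewrite nth_nseq if_same; apply/size0nil/rows0; lia.
Qed.

Lemma ssyt_three_rows n a m T : size a = 3 + m -> (forall r, 3 <= r -> rowlen a r = 0) ->
  ssyt n a T -> T = [:: nth [::] T 0; nth [::] T 1; nth [::] T 2] ++ nseq m [::].
Proof.
move=> size_a a_short /and5P[/eqP size_T /allP row_sizes _ _ _].
apply: eq_three_rows; first by rewrite size_T.
move=> r r_range; rewrite -(a_short r) ?(eqP (row_sizes r _)) ?mem_iota; lia.
Qed.

Lemma skew_tableau_three_rows n a e m T : size a = 3 + m ->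
  (forall r, 3 <= r -> rowlen a r = 0) ->
  skew_tableau n a e T -> T = [:: nth [::] T 0; nth [::] T 1; nth [::] T 2] ++ nseq m [::].
Proof.
move=> size_a a_short /and5P[/eqP size_T /allP row_sizes _ _ _].
apply: eq_three_rows; first by rewrite size_T.
move=> r r_range; rewrite (eqP (row_sizes r _)) ?a_short ?mem_iota; lia.
Qed.

Lemma flatten_nseq_nil (T : Type) m : flatten (nseq m ([::] : seq T)) = [::].
Proof. by elim: m. Qed.

Lemma word_three_rows R1 R2 R3 m :
  word ([:: R1; R2; R3] ++ nseq m [::]) = rev R1 ++ rev R2 ++ rev R3.
Proof.
rewrite /word map_cat flatten_cat /= (_ : map rev _ = nseq m [::]).
  by rewrite flatten_nseq_nil !cats0 catA.
by elim: m => //= m ->.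
Qed.

Lemma all_iota_from (P : pred nat) s m : (forall r, s <= r -> P r) -> all P (iota s m).
Proof. by move=> P_ge; apply/allP => r; rewrite mem_iota => /andP[/P_ge]. Qed.

Lemma ssyt3E n a m R1 R2 R3 : size a = 3 + m -> (forall r, 3 <= r -> rowlen a r = 0) ->
  ssyt n a ([:: R1; R2; R3] ++ nseq m [::]) =
  [&& [&& size R1 == rowlen a 0, size R2 == rowlen a 1 & size R3 == rowlen a 2],
      all (fun x => (1 <= x) && (x <= 2 * n)) (R1 ++ R2 ++ R3),
      [&& sorted leq R1, sorted leq R2 & sorted leq R3],
      all (fun k => nth 0 R1 k < nth 0 R2 k) (iota 0 (rowlen a 1)) &
      all (fun k => nth 0 R2 k < nth 0 R3 k) (iota 0 (rowlen a 2))].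
Proof.
move=> size_a a_short; rewrite /ssyt size_cat size_nseq size_a /= eqxx /=.
rewrite (@all_iota_from _ 3 (0 + m)); last first.
  by move=> [|[|[|r]]] //= _; rewrite nth_nseq if_same a_short.
rewrite (@all_iota_from _ 2 (0 + m)); last by move=> r le2r /=; rewrite a_short.
by rewrite flatten_nseq_nil /= cats0 all_nseq orbT /entry /= !andbT.
Qed.

Lemma skew_tableau3E n a e k m R1 R2 R3 :
  size a = 3 + m -> (forall r, 3 <= r -> rowlen a r = 0) ->
  rowlen e 0 = k -> rowlen e 1 = k -> rowlen e 2 = 0 ->
  skew_tableau n a e ([:: R1; R2; R3] ++ nseq m [::]) =
  [&& [&& size R1 == rowlen a 0 - k, size R2 == rowlen a 1 - k & size R3 == rowlen a 2],
      all (fun x => (1 <= x) && (x <= 2 * n)) (R1 ++ R2 ++ R3),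
      [&& sorted leq R1, sorted leq R2 & sorted leq R3],
      all (fun j => (k <= j) ==> (nth 0 R1 (j - k) < nth 0 R2 (j - k))) (iota 0 (rowlen a 1)) &
      all (fun j => (k <= j) ==> (nth 0 R2 (j - k) < nth 0 R3 j)) (iota 0 (rowlen a 2))].
Proof.
move=> size_a a_short e0 e1 e2; rewrite /skew_tableau size_cat size_nseq size_a /= eqxx /=.
rewrite (@all_iota_from _ 3 (0 + m)); last first.
  by move=> [|[|[|r]]] //= _; rewrite nth_nseq if_same a_short.
rewrite (@all_iota_from _ 2 (0 + m)); last by move=> r le2r /=; rewrite a_short.
rewrite flatten_nseq_nil /= cats0 all_nseq orbT /entry /= !andbT e0 e1 e2.
by rewrite subn0; congr [&& _, _, _, _ & _]; apply: eq_all => j; rewrite subn0.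
Qed.

(** * The two families of tableaux *)

Definition domres_word n x1 x2 x3 x4 x5 x6 : seq nat :=
  nseq x1 1 ++ nseq x2 (2 * n) ++ nseq x3 2 ++ nseq x4 (2 * n) ++ nseq x5 (2 * n).-1 ++ nseq x6 3.

(* For n = 2 the letters 3 = 2n-1 coincide, hence the hypothesis on x6. *)
Lemma hatcoef_domres_word n x1 x2 x3 x4 x5 x6 i : 2 <= n -> (n = 2 -> x6 = 0) -> 1 <= i <= n ->
  hatcoef n (domres_word n x1 x2 x3 x4 x5 x6) i =
  (((i == 1) : nat)%:Z * (x1%:Z - x2%:Z - x4%:Z) + ((i == 2) : nat)%:Z * (x3%:Z - x5%:Z)
   + ((i == 3) : nat)%:Z * x6%:Z)%R.
Proof.
move=> n_ge2 x6_0 i_range; rewrite /domres_word !hatcoef_cat !hatcoef_nseq.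
have [n2 | n_ne2] := eqVneq n 2; first by rewrite (x6_0 n2) muln0; decide_nat_eqs; lia.
by decide_nat_eqs; lia.
Qed.

Lemma hatdominant_domres_word n x1 x2 x3 x4 x5 x6 : 2 <= n -> (n = 2 -> x6 = 0) ->
  x3 + x2 + x4 <= x1 + x5 -> x5 + x6 <= x3 -> hatdominant n (domres_word n x1 x2 x3 x4 x5 x6).
Proof.
move=> n_ge2 x6_0 le_c2_c1 le_c3_c2.
by apply: hatdominant_intro => [i i_range|]; rewrite !hatcoef_domres_word //; lia.
Qed.

Lemma domres_word_prefixes (P : pred (seq nat)) n x1 x2 x3 x4 x5 x6 :
  (forall j, j <= x1 -> P (domres_word n j 0 0 0 0 0)) ->
  (forall j, j <= x2 -> P (domres_word n x1 j 0 0 0 0)) ->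
  (forall j, j <= x3 -> P (domres_word n x1 x2 j 0 0 0)) ->
  (forall j, j <= x4 -> P (domres_word n x1 x2 x3 j 0 0)) ->
  (forall j, j <= x5 -> P (domres_word n x1 x2 x3 x4 j 0)) ->
  (forall j, j <= x6 -> P (domres_word n x1 x2 x3 x4 x5 j)) ->
  all P (prefixes (domres_word n x1 x2 x3 x4 x5 x6)).
Proof.
rewrite /domres_word /= => P1 P2 P3 P4 P5 P6; apply/all_prefixesP; rewrite !catA -[nseq x1 1]cat0s.
apply: take_cat_nseq_closed; last by move=> j /P6; rewrite /= ?cats0 ?catA.
apply: take_cat_nseq_closed; last by move=> j /P5; rewrite /= ?cats0 ?catA.
apply: take_cat_nseq_closed; last by move=> j /P4; rewrite /= ?cats0 ?catA.
apply: take_cat_nseq_closed; last by move=> j /P3; rewrite /= ?cats0 ?catA.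
apply: take_cat_nseq_closed; last by move=> j /P2; rewrite /= ?cats0 ?catA.
apply: take_cat_nseq_closed; last by move=> j /P1; rewrite /= ?cats0 ?catA.
by move=> j; have := P1 0 (leq0n _); rewrite cats0.
Qed.

Definition domres_tableau n L1 L2 m p q r : seq (seq nat) :=
  [:: nseq L1 1; nseq (L2 - m) 2 ++ nseq m (2 * n);
      nseq r 3 ++ nseq q (2 * n).-1 ++ nseq p (2 * n)] ++ nseq (2 * n - 4) [::].

Lemma word_domres_tableau n L1 L2 m p q r :
  word (domres_tableau n L1 L2 m p q r) = domres_word n L1 m (L2 - m) p q r.
Proof. by rewrite /domres_tableau word_three_rows !rev_cat !rev_nseq /domres_word -!catA. Qed.

Definition LR_word y1 y2 y3 y4 y5 : seq nat :=
  nseq y1 1 ++ nseq y2 2 ++ nseq y3 3 ++ nseq y4 2 ++ nseq y5 1.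

Lemma LR_word_counts n y1 y2 y3 y4 y5 : y2 + y4 <= y1 + y5 -> y3 <= y2 + y4 ->
  all (fun i => count_mem i.+1 (LR_word y1 y2 y3 y4 y5) <= count_mem i (LR_word y1 y2 y3 y4 y5))
      (iota 1 (2 * n)).
Proof.
move=> le21 le32; apply/allP => i; rewrite mem_iota /LR_word !count_cat !count_nseq /=.
by case: i => [|[|[|[|i]]]] /=; lia.
Qed.

Lemma LR_word_prefixes (P : pred (seq nat)) y1 y2 y3 y4 y5 :
  (forall j, j <= y1 -> P (LR_word j 0 0 0 0)) ->
  (forall j, j <= y2 -> P (LR_word y1 j 0 0 0)) ->
  (forall j, j <= y3 -> P (LR_word y1 y2 j 0 0)) ->
  (forall j, j <= y4 -> P (LR_word y1 y2 y3 j 0)) ->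
  (forall j, j <= y5 -> P (LR_word y1 y2 y3 y4 j)) ->
  all P (prefixes (LR_word y1 y2 y3 y4 y5)).
Proof.
rewrite /LR_word /= => P1 P2 P3 P4 P5; apply/all_prefixesP; rewrite !catA -[nseq y1 1]cat0s.
apply: take_cat_nseq_closed; last by move=> j /P5; rewrite /= ?cats0 ?catA.
apply: take_cat_nseq_closed; last by move=> j /P4; rewrite /= ?cats0 ?catA.
apply: take_cat_nseq_closed; last by move=> j /P3; rewrite /= ?cats0 ?catA.
apply: take_cat_nseq_closed; last by move=> j /P2; rewrite /= ?cats0 ?catA.
apply: take_cat_nseq_closed; last by move=> j /P1; rewrite /= ?cats0 ?catA.
by move=> j; have := P1 0 (leq0n _); rewrite cats0.
Qed.

Definition two_column_shape n k : seq nat := [:: 0; k; 0] ++ nseq (2 * n - 4) 0.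

Lemma rowlen_two_column_shape n k :
  [/\ rowlen (two_column_shape n k) 0 = k, rowlen (two_column_shape n k) 1 = k &
      rowlen (two_column_shape n k) 2 = 0].
Proof.
have e2 : rowlen (two_column_shape n k) 2 = 0.
  by apply: rowlen_eq0 => -[|[|[|j]]] //= _; rewrite nth_nseq if_same.
have e1 : rowlen (two_column_shape n k) 1 = k by rewrite rowlen_recl // e2 addn0.
by split => //; rewrite rowlen_recl // e1.
Qed.

Definition LR_tableau n L1 L2 k u s t : seq (seq nat) :=
  [:: nseq (L1 - k) 1; nseq (L2 - k) 2; nseq u 1 ++ nseq s 2 ++ nseq t 3] ++ nseq (2 * n - 4) [::].

Lemma word_LR_tableau n L1 L2 k u s t :
  word (LR_tableau n L1 L2 k u s t) = LR_word (L1 - k) (L2 - k) t s u.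
Proof. by rewrite /LR_tableau word_three_rows !rev_cat !rev_nseq /LR_word -!catA. Qed.

Section ThreeRowShape.

Variables (n : nat) (a b : seq nat).
Hypotheses (n_ge2 : 2 <= n) (size_a : size a = (2 * n).-1) (size_b : size b = n)
  (a_short : forall r, 3 <= r -> rowlen a r = 0).

Local Notation L1 := (rowlen a 0).
Local Notation L2 := (rowlen a 1).
Local Notation L3 := (rowlen a 2).

Let size_a3 : size a = 3 + (2 * n - 4). Proof. by rewrite size_a; lia. Qed.
Let L12 : L2 <= L1. Proof. exact: leq_rowlenS. Qed.
Let L23 : L3 <= L2. Proof. exact: leq_rowlenS. Qed.
Let b_default i : n <= i -> rowlen b i = 0. Proof. by move=> le_ni; rewrite rowlen_default ?size_b. Qed.

(* Column strictness under the letters 2n of row 2, dominance c_2 <= c_1 after the letters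
   2n of row 3, the shape of row 3, and the weight nu. *)
Definition domres_admissible m p q r : Prop :=
  [/\ m + L3 <= L2, p <= L1 - L2, p + q + r = L3 &
      [/\ rowlen b 0 = L1 - m - p, rowlen b 1 = L2 - m - q, rowlen b 2 = r &
          forall i, 3 <= i -> rowlen b i = 0]].

Lemma domres_nu_tableau m p q r : domres_admissible m p q r ->
  domres_nu n a b (domres_tableau n L1 L2 m p q r).
Proof.
case=> m_le p_le sum_pqr [b0 b1 b2 b_ge3].
have r0 : n = 2 -> r = 0 by move=> n2; rewrite -b2 b_default // n2.
apply/andP; split; [apply/andP; split |].
- rewrite /domres_tableau ssyt3E //; apply/and5P; split.
  + by rewrite !size_cat !size_nseq; apply/and3P; split; apply/eqP; lia.
  + by rewrite !all_cat !all_nseq; lia.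
  + rewrite sorted_nseq !sorted_nseq_cat ?sorted_nseq ?all_cat ?all_nseq //; lia.
  + by apply/allP => k; rewrite mem_iota nth_nseq nth_blocks2; repeat case: ifP; lia.
  + by apply/allP => k; rewrite mem_iota nth_blocks2 nth_blocks3; repeat case: ifP; lia.
- rewrite word_domres_tableau; apply: domres_word_prefixes => j le_j;
    apply: hatdominant_domres_word; lia.
- rewrite word_domres_tableau; apply/allP => i; rewrite mem_iota => i_range; apply/eqP.
  rewrite hatcoef_domres_word //.
  by case: i i_range => [|[|[|[|i]]]] i_range //=; rewrite ?b0 ?b1 ?b2 ?b_ge3; lia.
Qed.

Lemma domres_rows R1 R2 R3 : domres n a ([:: R1; R2; R3] ++ nseq (2 * n - 4) [::]) ->
  [/\ R1 = nseq L1 1,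
      R2 = nseq (L2 - count_mem (2 * n) R2) 2 ++ nseq (count_mem (2 * n) R2) (2 * n) &
      R3 = nseq (L3 - count_mem (2 * n).-1 R3 - count_mem (2 * n) R3) 3
           ++ nseq (count_mem (2 * n).-1 R3) (2 * n).-1 ++ nseq (count_mem (2 * n) R3) (2 * n)].
Proof.
rewrite /domres ssyt3E // word_three_rows !all_cat.
case/andP=> /and5P[/and3P[/eqP size1 /eqP size2 /eqP size3]].
move=> /and3P[/allP range1 /allP range2 /allP range3] /and3P[sorted1 sorted2 sorted3].
move=> /allP col12 /allP col23 dom.
have ge1 : {in R1, forall x, 0 < x} by move=> x /range1 /andP[].
have R1_E : R1 = nseq L1 1.
  rewrite -size1; apply/all_pred1P/allP => x x_R1.
  have := hatdominant_row (w := [::]) (leqnn 1) sorted1 ge1 isT dom x_R1.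
  by rewrite /=; have := range1 x x_R1; lia.
have gt1 : {in R2, forall x, 1 < x}.
  apply: (column_lower_bound _ _ ge1); first by rewrite size1 size2.
  by move=> k; rewrite size2 => lt_k; apply: col12; rewrite mem_iota.
have R2_E : R2 = nseq (count_mem 2 R2) 2 ++ nseq (count_mem (2 * n) R2) (2 * n).
  apply: sorted_two_blocks => // [|x x_R2]; first lia.
  have := hatdominant_row (w := rev R1) (isT : 0 < 2) sorted2 gt1 _ dom x_R2.
  rewrite R1_E rev_nseq all_nseq orbT => /(_ isT).
  by have := range2 x x_R2; lia.
have count2 : count_mem 2 R2 = L2 - count_mem (2 * n) R2.
  by have := congr1 size R2_E; rewrite size_cat !size_nseq size2; lia.
split => //; first by rewrite -count2.
have gt2 : {in R3, forall x, 2 < x}.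
  apply: (column_lower_bound _ _ gt1); first by rewrite size2 size3.
  by move=> k; rewrite size3 => lt_k; apply: col23; rewrite mem_iota.
have dom3 : all (hatdominant n) (prefixes ((rev R1 ++ rev R2) ++ rev R3 ++ [::])).
  by rewrite cats0 -catA.
have out12 : all (fun x => (x < 3) || (2 * n + 1 - 3 < x)) (rev R1 ++ rev R2).
  by rewrite R1_E R2_E rev_cat !rev_nseq !all_cat !all_nseq; lia.
have R3_vals : {in R3, forall x, [|| x == 3, x == (2 * n).-1 | x == 2 * n]}.
  move=> x x_R3; have := range3 x x_R3.
  by have := hatdominant_row (isT : 0 < 3) sorted3 gt2 out12 dom3 x_R3; lia.
by rewrite -size3; apply: sorted_three_blocks_leq => //; lia.
Qed.

Lemma domres_tableau_admissible m p q r : m <= L2 -> p + q + r = L3 -> (n = 2 -> r = 0) ->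
  domres_nu n a b (domres_tableau n L1 L2 m p q r) -> domres_admissible m p q r.
Proof.
move=> m_le sum_pqr r0 /andP[/andP[T_ssyt T_dom] T_wt].
have col_m : m + L3 <= L2.
  rewrite leqNgt; apply/negP => lt_L3.
  move: T_ssyt; rewrite /domres_tableau ssyt3E // => /and5P[_ _ _ _ /allP/(_ (L2 - m))].
  by rewrite mem_iota nth_blocks2 nth_blocks3; repeat case: ifP; lia.
have dom_p : hatdominant n (domres_word n L1 m (L2 - m) p 0 0).
  apply: (prefixes_catl (v := nseq q (2 * n).-1 ++ nseq r 3)).
  by move: T_dom; rewrite word_domres_tableau /domres_word /= cats0 -!catA.
have p_le : p <= L1 - L2.
  by have := hatdominant_le dom_p (i := 1) ltac:(lia); rewrite !hatcoef_domres_word //; lia.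
have wt i : 1 <= i <= n -> hatcoef n (domres_word n L1 m (L2 - m) p q r) i = rowlen b i.-1.
  move=> i_range; apply/eqP; move: T_wt; rewrite word_domres_tableau => /allP; apply.
  by rewrite mem_iota; lia.
split; [done | lia | done | split].
- by have := wt 1 ltac:(lia); rewrite hatcoef_domres_word //=; lia.
- by have := wt 2 ltac:(lia); rewrite hatcoef_domres_word //=; lia.
- have [n2 | n_gt2] : n = 2 \/ 2 < n by lia.
    by rewrite r0 // b_default // n2.
  by have := wt 3 ltac:(lia); rewrite hatcoef_domres_word //=; lia.
- move=> i le3i; have [le_ni | lt_in] := leqP n i; first exact: b_default.
  by have := wt i.+1 ltac:(lia); rewrite hatcoef_domres_word //=; decide_nat_eqs; lia.
Qed.

Lemma domres_nu_inv T : domres_nu n a b T ->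
  exists m p q r, T = domres_tableau n L1 L2 m p q r /\ domres_admissible m p q r.
Proof.
move=> T_domres; have := ssyt_three_rows size_a3 a_short (andP (andP T_domres).1).1.
move: (nth [::] T 0) (nth [::] T 1) (nth [::] T 2) => R1 R2 R3 T_E.
rewrite T_E in T_domres *; have T_ssyt := (andP (andP T_domres).1).1.
move: T_ssyt; rewrite ssyt3E // => /and5P[/and3P[_ /eqP size2 /eqP size3] _ _ _ _].
have [R1_E R2_E R3_E] := domres_rows (andP T_domres).1.
exists (count_mem (2 * n) R2), (count_mem (2 * n) R3), (count_mem (2 * n).-1 R3).
exists (L3 - count_mem (2 * n).-1 R3 - count_mem (2 * n) R3).
have T_tableau : [:: R1; R2; R3] ++ nseq (2 * n - 4) [::] =
    domres_tableau n L1 L2 (count_mem (2 * n) R2) (count_mem (2 * n) R3)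
      (count_mem (2 * n).-1 R3) (L3 - count_mem (2 * n).-1 R3 - count_mem (2 * n) R3).
  by rewrite /domres_tableau -R1_E -R2_E -R3_E.
split => //; apply: domres_tableau_admissible; rewrite -?T_tableau //.
- by rewrite -size2 count_size.
- by have := congr1 size R3_E; rewrite !size_cat !size_nseq size3; lia.
- move=> n2; have := congr1 (count_mem (2 * n).-1) R3_E.
  by rewrite !count_cat !count_nseq n2 /=; lia.
Qed.

Lemma even_shape_inv e : size e = (2 * n).-1 -> shape_sub e a -> even_shape e ->
  e = two_column_shape n (nth 0 e 1) /\ nth 0 e 1 <= L2.
Proof.
move=> size_e /allP sub /allP even.
have sub_r r : r < size e -> rowlen e r <= rowlen a r.
  by move=> lt_r; apply: sub; rewrite mem_iota size_e -size_a maxnn; lia.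
have e3 : rowlen e 3 = 0.
  have [le_e3 | lt_3e] := leqP (size e) 3; first exact: rowlen_default.
  by have := sub_r 3 lt_3e; rewrite a_short //; lia.
have e_0 j : j != 1 -> nth 0 e j = 0.
  move=> ne_j1; have [le3j | lt_j3] := leqP 3 j; first by have := nth_leq_rowlen e le3j; lia.
  have [lt_je | le_ej] := ltnP j (size e); last by rewrite nth_default.
  have := even j; rewrite mem_iota lt_je => /(_ isT) /implyP even_j.
  by apply/eqP/even_j; case: j ne_j1 lt_j3 {lt_je even_j} => [|[|[|]]].
split; last by have := sub_r 1 ltac:(lia); have := nth_leq_rowlen e (leqnn 1); lia.
apply: (eq_from_nth (x0 := 0)) => [|j _]; first by rewrite size_cat size_nseq size_e /=; lia.
have [-> // | ne_j1] := eqVneq j 1; rewrite e_0 //.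
by case: j ne_j1 => [|[|[|j]]] //= _; rewrite nth_nseq if_same.
Qed.

Lemma two_column_shape_inside k : k <= L2 ->
  [&& size (two_column_shape n k) == (2 * n).-1, shape_sub (two_column_shape n k) a &
      even_shape (two_column_shape n k)].
Proof.
move=> k_le; have [e0 e1 e2] := rowlen_two_column_shape n k.
have nth_e j : 2 < j -> nth 0 (two_column_shape n k) j = 0.
  by case: j => [|[|[|j]]] //= _; rewrite nth_nseq if_same.
apply/and3P; split.
- by rewrite size_cat size_nseq /=; apply/eqP; lia.
- apply/allP => -[|[|[|r]]] _; rewrite ?e0 ?e1 ?e2 //; first lia.
  by rewrite rowlen_eq0 // => j le_rj; apply: nth_e; lia.
- by apply/allP => -[|[|[|j]]] _ //; rewrite implybE nth_e ?orbT.
Qed.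

Lemma LR_rows k R1 R2 R3 :
  LR n a (two_column_shape n k) b ([:: R1; R2; R3] ++ nseq (2 * n - 4) [::]) ->
  [/\ R1 = nseq (L1 - k) 1, R2 = nseq (L2 - k) 2 &
      R3 = nseq (count_mem 1 R3) 1 ++ nseq (count_mem 2 R3) 2 ++ nseq (count_mem 3 R3) 3].
Proof.
have [e0 e1 e2] := rowlen_two_column_shape n k.
rewrite /LR (skew_tableau3E _ _ _ _ size_a3 a_short e0 e1 e2) word_three_rows !all_cat.
case/and3P=> /and5P[/and3P[/eqP size1 /eqP size2 _]].
move=> /and3P[/allP range1 /allP range2 /allP range3] /and3P[sorted1 sorted2 sorted3].
move=> /allP col12 _ lat _.
have R1_E : R1 = nseq (L1 - k) 1.
  rewrite -size1; apply/all_pred1P/allP => x x_R1 /=.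
  have R1_le : {in R1, forall x, x <= 2 * n} by move=> y /range1 /andP[].
  have := lattice_row (w := [::]) (leqnn 1) sorted1 R1_le isT lat x_R1.
  by have := range1 x x_R1; lia.
have gt1 : {in R2, forall x, 1 < x}.
  apply: (column_lower_bound (R := R1)); first by rewrite size1 size2; lia.
    move=> j; rewrite size2 => lt_j; have := col12 (j + k); rewrite mem_iota addnK.
    by rewrite leq_addl /= => /(_ ltac:(lia)).
  by move=> y /range1 /andP[].
have R2_E : R2 = nseq (L2 - k) 2.
  rewrite -size2; apply/all_pred1P/allP => x x_R2 /=.
  have R2_le : {in R2, forall x, x <= 2 * n} by move=> y /range2 /andP[].
  have w_lt : all (fun x => x < 2) (rev R1) by rewrite R1_E rev_nseq all_nseq orbT.
  have := lattice_row (isT : 0 < 2) sorted2 R2_le w_lt lat x_R2.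
  by have := gt1 x x_R2; lia.
split => //; apply: sorted_three_blocks => // x x_R3.
have R3_le : {in R3, forall x, x <= 2 * n} by move=> y /range3 /andP[].
have w_lt : all (fun x => x < 3) (rev R1 ++ rev R2).
  by rewrite R1_E R2_E !rev_nseq all_cat !all_nseq !orbT.
have lat3 : lattice_word n ((rev R1 ++ rev R2) ++ rev R3 ++ [::]) by rewrite cats0 -catA.
have := lattice_row (isT : 0 < 3) sorted3 R3_le w_lt lat3 x_R3.
by have := range3 x x_R3; lia.
Qed.

(* eta inside lambda, the shape of row 3, column strictness under row 2, the lattice
   conditions #3 <= #2 and #2 <= #1, and the weight nu. *)
Definition LR_admissible k u s t : Prop :=
  [/\ k <= L2, u + s + t = L3, L3 - k <= t, t <= L2 - k &
      [/\ s <= L1 - L2, rowlen b 0 = L1 - k + u, rowlen b 1 = L2 - k + s, rowlen b 2 = t &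
          forall i, 3 <= i -> rowlen b i = 0]].

Lemma LRunion_tableau k u s t : LR_admissible k u s t ->
  LRunion n a b (two_column_shape n k, LR_tableau n L1 L2 k u s t).
Proof.
case=> k_le sum_ust t_ge t_le [s_le b0 b1 b2 b_ge3].
have [e0 e1 e2] := rowlen_two_column_shape n k.
rewrite /LRunion /=; case/and3P: (two_column_shape_inside k_le) => -> -> -> /=.
apply/and3P; split.
- rewrite /LR_tableau (skew_tableau3E _ _ _ _ size_a3 a_short e0 e1 e2); apply/and5P; split.
  + by rewrite !size_cat !size_nseq; apply/and3P; split; apply/eqP; lia.
  + by rewrite !all_cat !all_nseq; lia.
  + rewrite !sorted_nseq !sorted_nseq_cat ?sorted_nseq ?all_cat ?all_nseq //; lia.
  + by apply/allP => j; rewrite mem_iota !nth_nseq; repeat case: ifP; lia.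
  + by apply/allP => j; rewrite mem_iota nth_nseq nth_blocks3; repeat case: ifP; lia.
- rewrite word_LR_tableau; apply: LR_word_prefixes => j le_j;
    apply: LR_word_counts; lia.
- rewrite word_LR_tableau; apply/allP => i; rewrite mem_iota => i_range; apply/eqP.
  rewrite /LR_word !count_cat !count_nseq.
  by case: i i_range => [|[|[|[|i]]]] i_range //=; rewrite ?b0 ?b1 ?b2 ?b_ge3; lia.
Qed.

Lemma LR_tableau_admissible k u s t : k <= L2 -> u + s + t = L3 ->
  LR n a (two_column_shape n k) b (LR_tableau n L1 L2 k u s t) -> LR_admissible k u s t.
Proof.
move=> k_le sum_ust /and3P[T_skew lat wt].
have [e0 e1 e2] := rowlen_two_column_shape n k.
have t_ge : L3 - k <= t.
  rewrite leqNgt; apply/negP => lt_t.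
  move: T_skew; rewrite (skew_tableau3E _ _ _ _ size_a3 a_short e0 e1 e2).
  case/and5P=> _ _ _ _ /allP/(_ k); rewrite mem_iota leqnn subnn /= nth_nseq nth_blocks3.
  by repeat case: ifP; lia.
rewrite word_LR_tableau in lat wt.
have t_le : t <= L2 - k.
  have := @lattice_word_cat n (LR_word (L1 - k) (L2 - k) t 0 0) (nseq s 2 ++ nseq u 1) 2.
  rewrite /LR_word /= cats0 -!catA => /(_ lat ltac:(lia)).
  by rewrite !count_cat !count_nseq /=; lia.
have s_le : s <= L1 - L2.
  have := @lattice_word_cat n (LR_word (L1 - k) (L2 - k) t s 0) (nseq u 1) 1.
  rewrite /LR_word /= cats0 -!catA => /(_ lat ltac:(lia)).
  by rewrite !count_cat !count_nseq /=; lia.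
have wt_i i : 1 <= i <= 2 * n -> count_mem i (LR_word (L1 - k) (L2 - k) t s u) = rowlen b i.-1.
  by move=> i_range; apply/eqP/(allP wt); rewrite mem_iota; lia.
rewrite /LR_word in wt_i; split => //; split => //.
- by have := wt_i 1 ltac:(lia); rewrite !count_cat !count_nseq /=; lia.
- by have := wt_i 2 ltac:(lia); rewrite !count_cat !count_nseq /=; lia.
- by have := wt_i 3 ltac:(lia); rewrite !count_cat !count_nseq /=; lia.
- move=> i le3i; have [le_ni | lt_in] := leqP n i; first exact: b_default.
  by have := wt_i i.+1 ltac:(lia); rewrite !count_cat !count_nseq /=; decide_nat_eqs; lia.
Qed.

Lemma LRunion_inv x : LRunion n a b x ->
  exists k u s t, x = (two_column_shape n k, LR_tableau n L1 L2 k u s t) /\ LR_admissible k u s t.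
Proof.
case: x => e T; rewrite /LRunion /= => /and4P[/eqP size_e sub even T_LR].
have [e_E k_le] := even_shape_inv size_e sub even.
move: (nth 0 e 1) e_E k_le => k -> k_le in T_LR *.
have [T_skew _ _] := and3P T_LR.
have := skew_tableau_three_rows size_a3 a_short T_skew.
move: (nth [::] T 0) (nth [::] T 1) (nth [::] T 2) => R1 R2 R3 T_E.
rewrite T_E in T_LR T_skew *.
have [e0 e1 e2] := rowlen_two_column_shape n k.
move: T_skew; rewrite (skew_tableau3E _ _ _ _ size_a3 a_short e0 e1 e2).
case/and5P=> /and3P[_ _ /eqP size3] _ _ _ _.
have [R1_E R2_E R3_E] := LR_rows T_LR.
exists k, (count_mem 1 R3), (count_mem 2 R3), (count_mem 3 R3).
have T_tableau : [:: R1; R2; R3] ++ nseq (2 * n - 4) [::] =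
    LR_tableau n L1 L2 k (count_mem 1 R3) (count_mem 2 R3) (count_mem 3 R3).
  by rewrite /LR_tableau -R1_E -R2_E -R3_E.
split; first by rewrite T_tableau.
apply: LR_tableau_admissible; rewrite -?T_tableau //.
by have := congr1 size R3_E; rewrite !size_cat !size_nseq size3 addnA.
Qed.

Lemma LR_admissible_of_domres m p q r :
  domres_admissible m p q r -> LR_admissible (m + p + q) q p r.
Proof.
case=> col_m p_le sum_pqr [b0 b1 b2 b_ge3].
by split; [lia | lia | lia | lia | split => //; lia].
Qed.

Lemma domres_admissible_of_LR k u s t :
  LR_admissible k u s t -> domres_admissible (k - u - s) s u t.
Proof.
case=> k_le sum_ust t_ge t_le [s_le b0 b1 b2 b_ge3].
by split; [lia | lia | lia | split => //; lia].
Qed.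

Definition LR_of_domres (T : seq (seq nat)) : seq nat * seq (seq nat) :=
  let m := count_mem (2 * n) (nth [::] T 1) in
  let p := count_mem (2 * n) (nth [::] T 2) in
  let q := count_mem (2 * n).-1 (nth [::] T 2) in
  (two_column_shape n (m + p + q), LR_tableau n L1 L2 (m + p + q) q p (L3 - p - q)).

Definition domres_of_LR (x : seq nat * seq (seq nat)) : seq (seq nat) :=
  let k := nth 0 x.1 1 in
  let u := count_mem 1 (nth [::] x.2 2) in
  let s := count_mem 2 (nth [::] x.2 2) in
  domres_tableau n L1 L2 (k - u - s) s u (count_mem 3 (nth [::] x.2 2)).

Lemma LR_of_domres_tableau m p q r : domres_admissible m p q r ->
  LR_of_domres (domres_tableau n L1 L2 m p q r) =
  (two_column_shape n (m + p + q), LR_tableau n L1 L2 (m + p + q) q p r).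
Proof.
case=> _ _ sum_pqr [_ _ b2 _]; have r0 : n = 2 -> r = 0.
  by move=> n2; rewrite -b2 b_default // n2.
rewrite /LR_of_domres /= !count_cat !count_nseq /=.
have [n2 | n_gt2] : n = 2 \/ 2 < n by lia.
  by rewrite r0 // n2 /=; congr (two_column_shape _ _, LR_tableau _ _ _ _ _ _ _); lia.
by decide_nat_eqs; congr (two_column_shape _ _, LR_tableau _ _ _ _ _ _ _); lia.
Qed.

Lemma domres_of_LR_tableau k u s t :
  domres_of_LR (two_column_shape n k, LR_tableau n L1 L2 k u s t) =
  domres_tableau n L1 L2 (k - u - s) s u t.
Proof. by rewrite /domres_of_LR /= !count_cat !count_nseq /=; congr domres_tableau; lia. Qed.

Lemma domres_LR_bijection :
  exists f : {T | domres_nu n a b T} -> {x | LRunion n a b x}, bijective f.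
Proof.
have LR_in T : domres_nu n a b T -> LRunion n a b (LR_of_domres T).
  case/domres_nu_inv => m [p [q [r [-> adm]]]].
  by rewrite LR_of_domres_tableau //; apply/LRunion_tableau/LR_admissible_of_domres.
have domres_in x : LRunion n a b x -> domres_nu n a b (domres_of_LR x).
  case/LRunion_inv => k [u [s [t [-> adm]]]].
  by rewrite domres_of_LR_tableau; apply/domres_nu_tableau/domres_admissible_of_LR.
exists (fun T => exist (LRunion n a b) _ (LR_in _ (valP T))).
exists (fun x => exist (domres_nu n a b) _ (domres_in _ (valP x))).
- case=> T T_domres; apply: val_inj => /=.
  have [m [p [q [r [T_E adm]]]]] := domres_nu_inv T_domres.
  rewrite T_E LR_of_domres_tableau // domres_of_LR_tableau.
  by case: adm => *; congr domres_tableau; lia.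
- case=> x x_LR; apply: val_inj => /=.
  have [k [u [s [t [x_E adm]]]]] := LRunion_inv x_LR.
  rewrite x_E domres_of_LR_tableau LR_of_domres_tableau; last exact: domres_admissible_of_LR.
  by case: adm => *; congr (two_column_shape _ _, LR_tableau _ _ _ _ _ _ _); lia.
Qed.

End ThreeRowShape.

Theorem proposition6p6 (n : nat) (a b : seq nat) :
  2 <= n -> size a = (2 * n).-1 -> size b = n ->
  (n = 2 \/ forall j, 3 <= j -> nth 0 a j = 0) ->
  exists f : {T : seq (seq nat) | domres_nu n a b T} ->
             {p : seq nat * seq (seq nat) | LRunion n a b p},
    bijective f.
Proof.
move=> n_ge2 size_a size_b three_rows.
exact: domres_LR_bijection n_ge2 size_a size_b (rowlen_three_rows size_a three_rows).
Qed.
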